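(* Let $T>K$ be positive integers. Consider the linear model $\mathbf{y}=\mathbf{X}\boldsymbol{\beta}+\mathbf{u}$, where $\mathbf{X}$ is a known non-stochastic real $(T\times K)$ matrix (possibly of rank less than $K$), $\boldsymbol{\beta}\in\mathbb{R}^K$ is unknown and satisfies the linear restrictions $\mathbf{R}\boldsymbol{\beta}=\mathbf{r}$ with known $\mathbf{R}\in\mathbb{R}^{q\times K}$, $\mathbf{r}\in\mathbb{R}^q$, $E(\mathbf{u})=\mathbf{0}$ and $E(\mathbf{u}\mathbf{u}')=\sigma^2\boldsymbol{\Omega}$, where $\sigma^2>0$ is an unknown scalar and $\boldsymbol{\Omega}$ is a known symmetric nonnegative definite $(T\times T)$ matrix with $\mathrm{tr}(\boldsymbol{\Omega})=T$ and rank $M$ (possibly $M<T$). Write $\boldsymbol{\Omega}=\mathbf{F}\boldsymbol{\Lambda}\mathbf{F}'$, where $\mathbf{F}$ is a $(T\times M)$ matrix with orthonormal columns (eigenvectors of $\boldsymbol{\Omega}$ for its positive eigenvalues) and $\boldsymbol{\Lambda}$ is the $(M\times M)$ diagonal matrix of the positive eigenvalues, so that $\boldsymbol{\Omega}^+=\mathbf{F}\boldsymbol{\Lambda}^{-1}\mathbf{F}'$ is the Moore–Penrose inverse of $\boldsymbol{\Omega}$. Let $\mathbf{A}$ be a $(T\times(T-M))$ matrix with orthonormal columns satisfying $\boldsymbol{\Omega}\mathbf{A}=\mathbf{0}$, and let $\mathbf{g}=\mathbf{A}'\mathbf{X}\boldsymbol{\beta}$ (so that $\mathbf{A}'\mathbf{y}=\mathbf{g}$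 with probability one). Define \[ \mathbf{H}=\begin{pmatrix}\mathbf{R}\\ \mathbf{A}'\mathbf{X}\end{pmatrix},\qquad \mathbf{h}=\begin{pmatrix}\mathbf{r}\\ \mathbf{g}\end{pmatrix},\qquad \mathbf{C}_+=\mathbf{X}'\boldsymbol{\Omega}^+\mathbf{X}, \] let $\mathbf{N}$ be a $(K\times(K-\mathrm{rk}(\mathbf{H})))$ matrix whose columns form an orthonormal basis of the null space of $\mathbf{H}$, and let $\mathbf{S}=\mathbf{N}'\mathbf{C}_+\mathbf{N}$. Assume (i) $\mathrm{rk}(\mathbf{R})=\mathrm{rk}(\mathbf{R},\mathbf{r})$; (ii) the stacked matrix $\begin{pmatrix}\mathbf{R}\\ \mathbf{X}\end{pmatrix}$ has full column rank $K$; (iii) $\mathrm{rk}(\mathbf{H})=\mathrm{rk}(\mathbf{H},\mathbf{h})$. Let $\boldsymbol{\beta}^*\in\mathbb{R}^K$ be an arbitrary vector with $\mathbf{H}\boldsymbol{\beta}^*=\mathbf{h}$. Then $\mathbf{S}$ is invertible and the linear system in $\mathbf{b}\in\mathbb{R}^K$ \[ \mathbf{H}\mathbf{b}=\mathbf{h},\qquad \mathbf{N}'\mathbf{C}_+\mathbf{b}=\mathbf{N}'\mathbf{X}'\boldsymbol{\Omega}^+\mathbf{y} \] has the unique solution \[ \hat{\boldsymbol{\beta}}=\mathbf{N}\mathbf{S}^{-1}\mathbf{N}'\mathbf{X}'\boldsymbol{\Omega}^+\mathbf{y}+(\mathbf{I}_K-\mathbf{N}\mathbf{S}^{-1}\mathbf{N}'\mathbf{C}_+)\boldsymbol{\beta}^*,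 \] and, regarding $\hat{\boldsymbol{\beta}}$ as a random vector through $\mathbf{y}$, $E(\hat{\boldsymbol{\beta}})=\boldsymbol{\beta}$ and $\mathrm{Var}(\hat{\boldsymbol{\beta}})=\sigma^2\mathbf{N}\mathbf{S}^{-1}\mathbf{N}'$.
   Context: $\mathrm{rk}$ denotes matrix rank, $(\mathbf{B},\mathbf{b})$ the matrix obtained by appending the column(s) $\mathbf{b}$ to $\mathbf{B}$, and a stacked matrix $\begin{pmatrix}\mathbf{B}_1\\ \mathbf{B}_2\end{pmatrix}$ is formed by placing the rows of $\mathbf{B}_2$ below those of $\mathbf{B}_1$. The restrictions $\mathbf{H}\boldsymbol{\beta}=\mathbf{h}$ combine the explicit restrictions $\mathbf{R}\boldsymbol{\beta}=\mathbf{r}$ with the implicit restrictions $\mathbf{A}'\mathbf{X}\boldsymbol{\beta}=\mathbf{g}$ induced by the singularity of $\boldsymbol{\Omega}$. $\mathrm{Var}$ denotes the covariance matrix. *)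

From HB Require Import structures.
From mathcomp Require Import all_boot all_order all_algebra.
From mathcomp Require Import all_classical all_reals all_analysis.
Set Implicit Arguments. Unset Strict Implicit. Unset Printing Implicit Defensive.
Import Order.TTheory GRing.Theory Num.Theory.
Local Open Scope ring_scope.

Definition beta_hat (R : realType) (T K p : nat)
  (X : 'M[R]_(T, K)) (Omp : 'M[R]_T) (N : 'M[R]_(K, p)) (bstar : 'cV[R]_K)
  (y : 'cV[R]_T) : 'cV[R]_K :=
  let Cp := X^T *m Omp *m X in
  let S := N^T *m Cp *m N in
  (N *m invmx S *m N^T *m X^T *m Omp *m y
   + (1%:M - N *m invmx S *m N^T *m Cp) *m bstar)%R.

From HB Require Import structures.
From mathcomp Require Import all_boot all_order all_algebra.
From mathcomp Require Import all_classical all_reals all_analysis.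
Import Order.TTheory GRing.Theory Num.Theory.
Local Open Scope ring_scope.
Set Implicit Arguments. Unset Strict Implicit.

(* Every solution of [H b = h] is [bstar + N w], so the second block of
   equations reads [S w = N' X' Om+ (y - X bstar)] with [S = N' C+ N].  [S] is
   invertible: [w' S w] is a sum of squares of [Lam^-1/2 F' X N w], and
   [F' X N w = 0] together with [A' X N w = 0] (from [H N = 0]) gives
   [X N w = 0] because the columns of [F] and [A] form an orthonormal basis;
   then [N w = 0] by the rank condition (ii).  Centering at [beta] gives
   [bhat = beta + G u] with the gain [G = N S^-1 N' X' Om+], hence
   [E bhat = beta] and [Var bhat = sigma2 G Om G' = sigma2 N S^-1 N'], the last
   step because [Om+ Om Om+ = Om+]. *)

Section DiagonalMatrices.
Variables (R : realFieldType) (n : nat) (lam : 'rV[R]_n).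

Lemma diag_mx_mulV : (forall i, lam 0 i != 0) ->
  diag_mx lam *m diag_mx (\row_i (lam 0 i)^-1) = 1%:M.
Proof.
move=> lam_neq0; rewrite mulmx_diag; apply/matrixP => i j; rewrite !mxE.
by case: eqP => [->|_]; rewrite ?mulr1n ?mulr0n ?mulfV.
Qed.

Lemma invmx_diag_mx : (forall i, lam 0 i != 0) ->
  invmx (diag_mx lam) = diag_mx (\row_i (lam 0 i)^-1).
Proof.
move=> /diag_mx_mulV lamV; have [lam_unit _] := mulmx1_unit lamV.
by rewrite -[RHS]mul1mx -(mulVmx lam_unit) -mulmxA lamV mulmx1.
Qed.

Lemma unitmx_diag_mx : (forall i, lam 0 i != 0) -> diag_mx lam \in unitmx.
Proof. by move=> /diag_mx_mulV /mulmx1_unit []. Qed.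

Lemma diag_mx_quad_eq0 (x : 'cV[R]_n) : (forall i, 0 < lam 0 i) ->
  (x^T *m diag_mx lam *m x) 0 0 = 0 -> x = 0.
Proof.
move=> lam_gt0; rewrite -mulmxA mxE.
under eq_bigr => i _ do rewrite mul_diag_mx !mxE mulrCA -expr2.
have sq_ge0 i : true -> 0 <= lam 0 i * x i 0 ^+ 2.
  by move=> _; rewrite mulr_ge0 ?sqr_ge0 ?ltW.
move=> /psumr_eq0P-/(_ sq_ge0) x0; apply/matrixP => i j; rewrite (ord1 j) mxE.
by move/eqP: (x0 i erefl); rewrite mulf_eq0 gt_eqF //= sqrf_eq0 => /eqP.
Qed.

End DiagonalMatrices.

Lemma gram_diag_unitmx (R : realFieldType) (m p : nat) (lam : 'rV[R]_m)
    (B : 'M[R]_(m, p)) : (forall i, 0 < lam 0 i) ->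
  (forall z : 'cV_p, B *m z = 0 -> z = 0) ->
  B^T *m diag_mx lam *m B \in unitmx.
Proof.
move=> lam_gt0 B_inj; rewrite -row_free_unit; apply: inj_row_free => w wS0.
have Bw0 : B *m w^T = 0.
  apply: (diag_mx_quad_eq0 lam_gt0).
  have -> : (B *m w^T)^T *m diag_mx lam *m (B *m w^T)
            = w *m (B^T *m diag_mx lam *m B) *m w^T.
    by rewrite trmx_mul trmxK !mulmxA.
  by rewrite wS0 mul0mx mxE.
by rewrite -[w]trmxK (B_inj _ Bw0) trmx0.
Qed.

Lemma invdiag_gram_unitmx (R : realFieldType) (t m p : nat) (F : 'M[R]_(t, m))
    (lam : 'rV[R]_m) (B : 'M[R]_(t, p)) : (forall i, 0 < lam 0 i) ->
  (forall z : 'cV_p, F^T *m B *m z = 0 -> z = 0) ->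
  B^T *m (F *m invmx (diag_mx lam) *m F^T) *m B \in unitmx.
Proof.
move=> lam_gt0 FB_inj; rewrite invmx_diag_mx => [|i]; last by rewrite gt_eqF.
have -> : B^T *m (F *m diag_mx (\row_i (lam 0 i)^-1) *m F^T) *m B
          = (F^T *m B)^T *m diag_mx (\row_i (lam 0 i)^-1) *m (F^T *m B).
  by rewrite !trmx_mul trmxK !mulmxA.
by apply: gram_diag_unitmx => // i; rewrite mxE invr_gt0.
Qed.

Lemma sandwich_mulmx_eq0 (R : comUnitRingType) (t m k : nat) (F : 'M[R]_(t, m))
    (D : 'M[R]_m) (B : 'M[R]_(t, k)) :
  F^T *m F = 1%:M -> D \in unitmx -> F *m D *m F^T *m B = 0 -> F^T *m B = 0.
Proof.
move=> FtF D_unit /(congr1 (mulmx (invmx D *m F^T))).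
by rewrite mulmx0 !mulmxA -(mulmxA _ F^T F) FtF mulmx1 mulVmx // mul1mx.
Qed.

Lemma sandwich_pinv (R : comUnitRingType) (t m : nat) (F : 'M[R]_(t, m))
    (D : 'M[R]_m) : F^T *m F = 1%:M -> D \in unitmx ->
  let Dp := F *m invmx D *m F^T in Dp *m (F *m D *m F^T) *m Dp = Dp.
Proof.
move=> FtF D_unit Dp; rewrite /Dp -!mulmxA (mulmxA F^T) FtF mul1mx.
by rewrite (mulmxA F^T) FtF mul1mx (mulmxA D) mulmxV // mul1mx.
Qed.

Lemma orthonormal_complement_eq0 (R : fieldType) (t m1 m2 : nat)
    (F : 'M[R]_(t, m1)) (A : 'M[R]_(t, m2)) (v : 'cV[R]_t) :
  (t <= m1 + m2)%N -> F^T *m F = 1%:M -> A^T *m A = 1%:M -> F^T *m A = 0 ->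
  F^T *m v = 0 -> A^T *m v = 0 -> v = 0.
Proof.
move=> tm FtF AtA FtA Ftv Atv; pose Q := row_mx F A.
have QtQ : Q^T *m Q = 1%:M.
  rewrite tr_row_mx mul_col_row FtF AtA FtA -[A^T *m F]trmxK trmx_mul trmxK FtA.
  by rewrite trmx0 -scalar_mx_block.
have Q_free : row_free Q.
  have rkQ : (m1 + m2 <= \rank Q)%N.
    by apply: (@mulmx1_min_rank _ _ _ _ _ Q^T 1%:M); rewrite mulmx1.
  by rewrite /row_free eqn_leq rank_leq_row (leq_trans tm).
apply: trmx_inj; rewrite trmx0; apply: (row_free_inj Q_free).
have vtE k (B : 'M[R]_(t, k)) : v^T *m B = (B^T *m v)^T by rewrite trmx_mul trmxK.
by rewrite mul0mx mul_mx_row !vtE Ftv Atv !trmx0 row_mx0.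
Qed.

Section RestrictedDesign.
Variables (R : fieldType) (T K q m1 m2 p : nat).
Variables (Rm : 'M[R]_(q, K)) (X : 'M[R]_(T, K)) (F : 'M[R]_(T, m1))
  (A : 'M[R]_(T, m2)) (N : 'M[R]_(K, p)).
Hypotheses (Tm : (T <= m1 + m2)%N) (FtF : F^T *m F = 1%:M)
  (AtA : A^T *m A = 1%:M) (FtA : F^T *m A = 0) (NtN : N^T *m N = 1%:M).
Hypotheses (HN0 : forall w : 'cV[R]_p, col_mx Rm (A^T *m X) *m (N *m w) = 0)
  (RX_full : \rank (col_mx Rm X) = K).

Lemma restricted_design_inj (z : 'cV[R]_p) : F^T *m X *m N *m z = 0 -> z = 0.
Proof.
move=> FXNz0.
have [RNz0 AXNz0] : Rm *m (N *m z) = 0 /\ A^T *m X *m (N *m z) = 0.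
  by apply/eq_col_mx; rewrite col_mx0 -mul_col_mx.
have XNz0 : X *m (N *m z) = 0.
  apply: (orthonormal_complement_eq0 Tm FtF AtA FtA).
    by rewrite !mulmxA.
  by rewrite -AXNz0 mulmxA.
have RX_free : row_free (col_mx Rm X)^T by rewrite /row_free mxrank_tr RX_full.
have Nz0 : N *m z = 0.
  apply: trmx_inj; rewrite trmx0; apply: (row_free_inj RX_free).
  by rewrite mul0mx -trmx_mul mul_col_mx RNz0 XNz0 col_mx0 trmx0.
by rewrite -[z]mul1mx -NtN -mulmxA Nz0 mulmx0.
Qed.

End RestrictedDesign.

Definition grls_gain (R : realType) (T K p : nat) (X : 'M[R]_(T, K))
    (Omp : 'M[R]_T) (N : 'M[R]_(K, p)) : 'M[R]_(K, T) :=
  N *m invmx (N^T *m (X^T *m Omp *m X) *m N) *m N^T *m X^T *m Omp.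

Section RestrictedEstimator.
Variables (R : realType) (T K p m : nat) (X : 'M[R]_(T, K)) (Omp : 'M[R]_T)
  (N : 'M[R]_(K, p)) (H : 'M[R]_(m, K)) (h : 'cV[R]_m) (bstar : 'cV[R]_K).
Let Cp := X^T *m Omp *m X.
Let S := N^T *m Cp *m N.
Hypotheses (S_unit : S \in unitmx)
  (H_null : forall v : 'cV[R]_K, H *m v = 0 <-> exists w, v = N *m w)
  (H_bstar : H *m bstar = h).

Lemma beta_hat_recenter (b : 'cV[R]_K) (yv : 'cV[R]_T) : H *m b = h ->
  beta_hat X Omp N bstar yv = b + grls_gain X Omp N *m (yv - X *m b).
Proof.
move=> Hb; have [w bstarE] : exists w : 'cV[R]_p, bstar - b = N *m w.
  by apply/H_null; rewrite mulmxBr Hb H_bstar subrr.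
have NSK : N *m invmx S *m N^T *m Cp *m (N *m w) = N *m w.
  have -> : N *m invmx S *m N^T *m Cp *m (N *m w) = N *m (invmx S *m S) *m w.
    by rewrite /S !mulmxA.
  by rewrite mulVmx ?mulmx1.
rewrite /beta_hat /grls_gain -/Cp -/S -[bstar](subrK b) bstarE.
rewrite mulmxBl mul1mx mulmxDr NSK mulmxBr /Cp !mulmxA.
by rewrite opprD addrACA subrr add0r addrCA.
Qed.

Lemma beta_hat_unique (yv : 'cV[R]_T) (b : 'cV[R]_K) :
  (H *m b = h /\ N^T *m Cp *m b = N^T *m X^T *m Omp *m yv)
  <-> b = beta_hat X Omp N bstar yv.
Proof.
have gainE v : grls_gain X Omp N *m v = N *m invmx S *m (N^T *m X^T *m Omp *m v).
  by rewrite /grls_gain -/Cp -/S !mulmxA.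
have scoreE v c : N^T *m X^T *m Omp *m (v - X *m c) =
                  N^T *m X^T *m Omp *m v - N^T *m Cp *m c.
  by rewrite mulmxBr /Cp !mulmxA.
split=> [[Hb normal_b]|->].
  by rewrite (beta_hat_recenter yv Hb) gainE scoreE normal_b subrr mulmx0 addr0.
rewrite (beta_hat_recenter yv H_bstar) gainE; split.
  have HNx (x : 'cV[R]_p) : H *m (N *m x) = 0 by apply/H_null; exists x.
  by rewrite mulmxDr H_bstar -mulmxA HNx addr0.
rewrite mulmxDr.
have -> : N^T *m Cp *m (N *m invmx S *m (N^T *m X^T *m Omp *m (yv - X *m bstar)))
          = S *m invmx S *m (N^T *m X^T *m Omp *m (yv - X *m bstar)).
  by rewrite /S !mulmxA.
by rewrite mulmxV // mul1mx scoreE addrC subrK.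
Qed.

Lemma grls_gain_sandwich (Om : 'M[R]_T) : Omp^T = Omp -> Omp *m Om *m Omp = Omp ->
  grls_gain X Omp N *m Om *m (grls_gain X Omp N)^T = N *m invmx S *m N^T.
Proof.
move=> Omp_sym Omp_pinv.
have S_sym : S^T = S by rewrite /S /Cp !trmx_mul !trmxK Omp_sym !mulmxA.
have -> : grls_gain X Omp N *m Om *m (grls_gain X Omp N)^T
          = N *m invmx S *m (N^T *m X^T *m (Omp *m Om *m Omp) *m X *m N)
              *m (invmx S)^T *m N^T.
  by rewrite /grls_gain -/Cp -/S !trmx_mul !trmxK Omp_sym !mulmxA.
rewrite Omp_pinv trmx_inv S_sym.
have -> : N^T *m X^T *m Omp *m X *m N = S by rewrite /S /Cp !mulmxA.
by rewrite -(mulmxA N) mulVmx // mulmx1.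
Qed.
End RestrictedEstimator.

Section LinearTransformOfRandomVector.
Variables (R : realType) (d : measure_display) (Ws : measurableType d)
  (P : probability Ws R) (T : nat) (u : 'I_T -> {RV P >-> R}).
Hypothesis u_L2 : forall i, (u i : Ws -> R) \in Lfun P 2%:E.

Let P_fin : P setT \is a fin_num := fin_num_measure P _ measurableT.

Let one_le_two : (1 <= 2%:E :> \bar R)%E. Proof. by rewrite lee1n. Qed.

Lemma covarianceZl2 (a : R) (Y Z : Ws -> R) :
  Y \in Lfun P 2%:E -> Z \in Lfun P 2%:E ->
  covariance P (a \o* Y)%R Z = (a%:E * covariance P Y Z)%E.
Proof.
move=> Y2 Z2; apply: covarianceZl; try exact: Lfun_subset12.
exact: Lfun2_mul_Lfun1.
Qed.

Lemma covariance_suml (I : Type) (s : seq I) (Ys : I -> Ws -> R) (Z : Ws -> R) :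
  (forall i, Ys i \in Lfun P 2%:E) -> Z \in Lfun P 2%:E ->
  covariance P (\sum_(i <- s) Ys i)%R Z = (\sum_(i <- s) covariance P (Ys i) Z)%E.
Proof.
move=> Ys2 Z2; elim: s => [|i s IHs]; first by rewrite !big_nil covariance_cst_l.
rewrite !big_cons covarianceDl ?IHs //.
by apply: rpred_sum => // j _; apply: Ys2.
Qed.

Section CoefficientRow.
Variables (n : nat) (G : 'M[R]_(n, T)) (k : 'I_n).

Lemma mulmx_col_rvE :
  (fun w => (G *m \col_i u i w) k ord0) = (\sum_i (G k i \o* (u i : Ws -> R)))%R.
Proof.
by apply/funext => w; rewrite fct_sumE mxE; apply: eq_bigr => i _; rewrite mxE mulrC.
Qed.

Lemma mulmx_col_rv_Lfun2 : (fun w => (G *m \col_i u i w) k ord0) \in Lfun P 2%:E.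
Proof.
rewrite mulmx_col_rvE; apply: rpred_sum => // i _.
by apply: Lfun_scale; rewrite ?ler1n.
Qed.

Lemma expectation_mulmx_col_rv : (forall i, 'E_P[u i] = 0)%E ->
  ('E_P[fun w => (G *m \col_i u i w) k ord0] = 0)%E.
Proof.
move=> u_centered; rewrite mulmx_col_rvE -(big_map _ xpredT idfun).
rewrite expectation_sum; last first.
  move=> _ /mapP[i _ ->]; apply: Lfun_subset12 => //.
  by apply: Lfun_scale; rewrite ?ler1n.
rewrite big_map big1 // => i _; rewrite expectationZl ?u_centered ?mule0 //.
exact: Lfun_subset12.
Qed.

End CoefficientRow.

Lemma covariance_mulmx_col_rv (V : 'M[R]_T) (n1 n2 : nat)
    (G1 : 'M[R]_(n1, T)) (G2 : 'M[R]_(n2, T)) (k : 'I_n1) (l : 'I_n2) :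
  (forall i j, covariance P (u i) (u j) = (V i j)%:E) ->
  covariance P (fun w => (G1 *m \col_i u i w) k ord0)
               (fun w => (G2 *m \col_i u i w) l ord0)
  = ((G1 *m V *m G2^T) k l)%:E.
Proof.
move=> u_cov.
have scaled_L2 (a : 'I_T -> R) i : (a i \o* (u i : Ws -> R))%R \in Lfun P 2%:E.
  by apply: Lfun_scale; rewrite ?ler1n.
have cov_u i : covariance P (u i) (fun w => (G2 *m \col_i u i w) l ord0)
               = (\sum_j G2 l j * V i j)%:E.
  rewrite covarianceC mulmx_col_rvE covariance_suml // -sumEFin.
  by apply: eq_bigr => j _; rewrite covarianceZl2 // covarianceC u_cov.
rewrite mulmx_col_rvE covariance_suml //; last exact: mulmx_col_rv_Lfun2.
under eq_bigr do rewrite covarianceZl2 ?cov_u ?mulmx_col_rv_Lfun2 //.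
rewrite sumEFin mxE; congr EFin.
under [RHS]eq_bigr do rewrite !mxE mulr_suml.
rewrite exchange_big; apply: eq_bigr => i _; rewrite mulr_sumr.
by apply: eq_bigr => j _; rewrite [G2 l j * _]mulrC mulrA.
Qed.

Lemma covariance_add_cst (a b : R) (Y Z : Ws -> R) :
  Y \in Lfun P 2%:E -> Z \in Lfun P 2%:E ->
  covariance P (fun w => a + Y w) (fun w => b + Z w) = covariance P Y Z.
Proof.
move=> Y2 Z2; have shiftE c (W : Ws -> R) : (fun w => c + W w) = (cst c \+ W)%R by [].
have cst_L2 c : cst c \in Lfun P 2%:E by exact: Lfun_cst.
rewrite !shiftE covarianceDl ?rpredD // covariance_cst_l add0e.
by rewrite covarianceC covarianceDl // covariance_cst_l add0e covarianceC.
Qed.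

Section AffineTransform.
Variables (n : nat) (c : 'cV[R]_n) (G : 'M[R]_(n, T)).

Let affineE k : (fun w => (c + G *m \col_i u i w) k ord0)
                = (fun w => c k ord0 + (G *m \col_i u i w) k ord0).
Proof. by apply/funext => w; rewrite mxE. Qed.

Lemma expectation_affine_col_rv (k : 'I_n) : (forall i, 'E_P[u i] = 0)%E ->
  ('E_P[fun w => ((c + G *m \col_i u i w) k ord0)%R] = (c k ord0)%:E)%E.
Proof.
move=> u_centered; rewrite affineE.
rewrite (_ : (fun w => _) = cst (c k ord0) \+ (fun w => (G *m \col_i u i w) k ord0))%R //.
rewrite expectationD ?expectation_cst ?expectation_mulmx_col_rv ?adde0 //.
  exact: Lfun_cst.
exact/Lfun_subset12/mulmx_col_rv_Lfun2.
Qed.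

Lemma covariance_affine_col_rv (V : 'M[R]_T) (k l : 'I_n) :
  (forall i j, covariance P (u i) (u j) = (V i j)%:E) ->
  covariance P (fun w => (c + G *m \col_i u i w) k ord0)
               (fun w => (c + G *m \col_i u i w) l ord0)
  = ((G *m V *m G^T) k l)%:E.
Proof.
move=> u_cov; rewrite !affineE covariance_add_cst ?mulmx_col_rv_Lfun2 //.
exact: covariance_mulmx_col_rv.
Qed.

End AffineTransform.

End LinearTransformOfRandomVector.

Theorem theorem3
  (R : realType) (d : measure_display) (Ws : measurableType d)
  (P : probability Ws R)
  (T K q M : nat) (hK : (0 < K)%N) (hTK : (K < T)%N)
  (X : 'M[R]_(T, K)) (beta : 'cV[R]_K)
  (Rm : 'M[R]_(q, K)) (r : 'cV[R]_q) (hRb : Rm *m beta = r)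
  (sigma2 : R) (hsigma : 0 < sigma2)
  (Om : 'M[R]_T) (hOmsym : Om^T = Om)
  (hOmpsd : forall v : 'cV[R]_T, 0 <= (v^T *m Om *m v) 0 0)
  (hOmtr : \tr Om = T%:R) (hOmrk : \rank Om = M)
  (F : 'M[R]_(T, M)) (hF : F^T *m F = 1%:M)
  (lam : 'rV[R]_M) (hlam : forall i, 0 < lam 0 i)
  (hOmF : Om = F *m diag_mx lam *m F^T)
  (A : 'M[R]_(T, T - M)) (hA : A^T *m A = 1%:M) (hOmA : Om *m A = 0)
  (N : 'M[R]_(K, K - \rank (col_mx Rm (A^T *m X))))
  (hN : N^T *m N = 1%:M)
  (hNnull : forall v : 'cV[R]_K,
      col_mx Rm (A^T *m X) *m v = 0 <-> exists w, v = N *m w)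
  (hi : \rank Rm = \rank (row_mx Rm r))
  (hii : \rank (col_mx Rm X) = K)
  (hiii : \rank (col_mx Rm (A^T *m X))
          = \rank (row_mx (col_mx Rm (A^T *m X)) (col_mx r (A^T *m X *m beta))))
  (bstar : 'cV[R]_K)
  (hbstar : col_mx Rm (A^T *m X) *m bstar = col_mx r (A^T *m X *m beta))
  (u : 'I_T -> {RV P >-> R})
  (hu2 : forall i, (u i : Ws -> R) \in Lfun P 2)
  (hEu : forall i, ('E_P[u i] = 0)%E)
  (hVu : forall i j, covariance P (u i) (u j) = (sigma2 * Om i j)%:E) :
  let Omp := F *m invmx (diag_mx lam) *m F^T in
  let Cp := X^T *m Omp *m X in
  let S := N^T *m Cp *m N in
  let H := col_mx Rm (A^T *m X) in
  let h := col_mx r (A^T *m X *m beta) in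
  let y := fun w : Ws => X *m beta + \col_i u i w in
  S \in unitmx
  /\ (forall (yv : 'cV[R]_T) (b : 'cV[R]_K),
        (H *m b = h /\ N^T *m Cp *m b = N^T *m X^T *m Omp *m yv)
        <-> b = beta_hat X Omp N bstar yv)
  /\ (forall k : 'I_K,
        ('E_P[fun w => beta_hat X Omp N bstar (y w) k ord0] = (beta k ord0)%:E)%E)
  /\ (forall k l : 'I_K,
        covariance P (fun w => beta_hat X Omp N bstar (y w) k ord0)
                     (fun w => beta_hat X Omp N bstar (y w) l ord0)
        = (sigma2 * (N *m invmx S *m N^T) k l)%:E).
Proof.
move=> Omp Cp S H h y.
(* (i) and (iii) only ensure that some [bstar] exists; here it is given. *)
have M_le_T : (M <= T)%N by rewrite -hOmrk rank_leq_row.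
have lam_neq0 i : lam 0 i != 0 by rewrite gt_eqF.
have D_unit := unitmx_diag_mx lam_neq0.
have FtA : F^T *m A = 0 by apply: (sandwich_mulmx_eq0 hF D_unit); rewrite -hOmF.
have HN0 (w : 'cV_(K - \rank H)) : H *m (N *m w) = 0 by apply/hNnull; exists w.
have S_unit : S \in unitmx.
  rewrite (_ : S = (X *m N)^T *m Omp *m (X *m N)); last first.
    by rewrite /S /Cp trmx_mul !mulmxA.
  apply: invdiag_gram_unitmx => // z; rewrite mulmxA.
  by apply: (restricted_design_inj _ hF hA FtA hN HN0 hii); rewrite subnKC.
have Hbeta : H *m beta = h by rewrite mul_col_mx hRb.
have Omp_sym : Omp^T = Omp by rewrite !trmx_mul trmxK trmx_inv tr_diag_mx mulmxA.
have Omp_pinv : Omp *m Om *m Omp = Omp by rewrite hOmF; exact: sandwich_pinv.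
have bhatE k : (fun w => beta_hat X Omp N bstar (y w) k ord0)
               = (fun w => (beta + grls_gain X Omp N *m \col_i u i w) k ord0).
  apply/funext => w; rewrite (beta_hat_recenter S_unit hNnull hbstar _ Hbeta).
  by rewrite /y /= [X *m beta + _]addrC addrK.
split; first exact: S_unit.
split; first by move=> yv b; exact: beta_hat_unique.
split=> [k|k l]; rewrite ?bhatE; first exact: expectation_affine_col_rv.
rewrite (covariance_affine_col_rv _ _ _ (V := sigma2 *: Om)) => [|//|i j].
  by rewrite -scalemxAr -scalemxAl grls_gain_sandwich // mxE.
by rewrite hVu mxE.
Qed.
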